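(* Let $\bm{N}=(N_0,\ldots,N_{n-1},-\sum_iN_i)$ and $\bm{M}=(M_0,\ldots,M_{n-1},-\sum_iM_i)$ with all $N_i,M_i\in\mathbb{Z}_{\ge0}$ and $N_i\ge M_i$ for every $i$. Then $K_n(\bm{N})\ge K_n(\bm{M})$.
   Context: $K_n(\bm{N})$ is the number of integer vectors $(f_{ij})_{0\le i<j\le n}\in\mathbb{Z}_{\ge0}^{\binom{n+1}{2}}$ with $\sum_{j>i} f_{ij}-\sum_{k<i} f_{ki}=N_i$ for every $i\in\{0,\ldots,n\}$. *)

From mathcomp Require Import all_boot all_order all_algebra.
Set Implicit Arguments. Unset Strict Implicit. Unset Printing Implicit Defensive.
Import Order.TTheory GRing.Theory Num.Theory.

Local Open Scope ring_scope.

(* Bound on the entries of any solution: every f_ij <= sum_{k<=i} N_k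
   <= sum_k |N_k|, so entries range in 'I_(kbound N).+1 without loss. *)
Definition kbound (n : nat) (N : 'I_n.+1 -> int) : nat :=
  (\sum_(k < n.+1) `|N k|)%N.

Definition is_flow (n : nat) (N : 'I_n.+1 -> int)
    (f : {ffun 'I_n.+1 * 'I_n.+1 -> 'I_(kbound N).+1}) : bool :=
  [forall i : 'I_n.+1, forall j : 'I_n.+1, (j <= i)%N ==> (nat_of_ord (f (i, j)) == 0%N)] &&
  [forall i : 'I_n.+1, (\sum_(j < n.+1 | (i < j)%N) (nat_of_ord (f (i, j)))%:Z)
             - (\sum_(k < n.+1 | (k < i)%N) (nat_of_ord (f (k, i)))%:Z) == N i].

Definition K (n : nat) (N : 'I_n.+1 -> int) : nat := #|[pred f | @is_flow n N f]|.

Definition extvec (n : nat) (N : 'I_n -> nat) : 'I_n.+1 -> int :=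
  fun i => match unlift ord_max i with
           | Some i' => (N i')%:Z
           | None => - (\sum_(k < n) (N k)%:Z)
           end.

(* A flow for M plus the flow that routes the surplus N_i - M_i of every vertex
   i < n along the edge (i, n) is a flow for N, and adding a fixed flow is
   injective; hence K_n(M) <= K_n(N). *)
From mathcomp Require Import all_boot all_order all_algebra.
From mathcomp Require Import zify.
Import GRing.Theory.
Set Implicit Arguments. Unset Strict Implicit.

Local Open Scope ring_scope.

Definition net_flow (n : nat) (g : 'I_n.+1 * 'I_n.+1 -> nat) (i : 'I_n.+1) : int :=
  \sum_(j < n.+1 | (i < j)%N) (g (i, j))%:Z - \sum_(k < n.+1 | (k < i)%N) (g (k, i))%:Z.

Lemma net_flowD (n : nat) (g h : 'I_n.+1 * 'I_n.+1 -> nat) (i : 'I_n.+1) :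
  net_flow (fun p => g p + h p)%N i = net_flow g i + net_flow h i.
Proof.
rewrite /net_flow; under eq_bigr do rewrite PoszD.
under [X in _ - X]eq_bigr do rewrite PoszD.
by rewrite !big_split opprD addrACA.
Qed.

Lemma eq_net_flow (n : nat) (g h : 'I_n.+1 * 'I_n.+1 -> nat) :
  g =1 h -> net_flow g =1 net_flow h.
Proof.
move=> gh i; rewrite /net_flow; under eq_bigr do rewrite gh.
by under [X in _ - X]eq_bigr do rewrite gh.
Qed.

Section AddFlow.

Variables (n : nat) (N N' : 'I_n.+1 -> int) (d : 'I_n.+1 * 'I_n.+1 -> nat).
Hypothesis d_upper : forall i j : 'I_n.+1, (j <= i)%N -> d (i, j) = 0%N.
Hypothesis net_flow_d : forall i, N' i = N i + net_flow d i.
(* Flows are encoded with entries truncated at [kbound]; this keeps the shifted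
   entries inside the codomain. *)
Hypothesis kbound_d : forall p, (kbound N + d p <= kbound N')%N.

Definition add_flow (f : {ffun 'I_n.+1 * 'I_n.+1 -> 'I_(kbound N).+1}) :
    {ffun 'I_n.+1 * 'I_n.+1 -> 'I_(kbound N').+1} :=
  [ffun p => inord (f p + d p)].

Lemma add_flowE f p : nat_of_ord (add_flow f p) = (f p + d p)%N.
Proof.
by rewrite ffunE inordK // ltnS (leq_trans _ (kbound_d p)) // leq_add2r -ltnS.
Qed.

Lemma add_flow_inj : injective add_flow.
Proof.
move=> f g /ffunP fg; apply/ffunP => p; apply: val_inj.
by have /eqP := congr1 val (fg p); rewrite /= !add_flowE eqn_add2r => /eqP.
Qed.

Lemma is_flow_add f : @is_flow n N f -> @is_flow n N' (add_flow f).
Proof.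
case/andP=> /forallP f_upper /forallP f_net; apply/andP; split.
  apply/forallP=> i; apply/forallP=> j; apply/implyP=> ji.
  by rewrite add_flowE d_upper // addn0; move/forallP/(_ j)/implyP: (f_upper i); apply.
apply/forallP=> i; rewrite net_flow_d -(eqP (f_net i)).
change (net_flow (fun p => nat_of_ord (add_flow f p)) i
        == net_flow (fun p => nat_of_ord (f p)) i + net_flow d i).
by rewrite -net_flowD (eq_net_flow (add_flowE f)).
Qed.

Lemma leq_K_add_flow : (K N <= K N')%N.
Proof.
rewrite /K -(card_imset _ add_flow_inj); apply/subset_leq_card/subsetP.
by move=> _ /imsetP [f f_flow ->]; rewrite inE is_flow_add.
Qed.

End AddFlow.

Lemma widen_ord_max_lift (n : nat) (i : 'I_n) : widen_ord (leqnSn n) i = lift ord_max i.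
Proof. by apply: ord_inj; rewrite lift_max. Qed.

Lemma extvec_lift (n : nat) (X : 'I_n -> nat) (i : 'I_n) : extvec X (lift ord_max i) = (X i)%:Z.
Proof. by rewrite /extvec liftK. Qed.

Lemma extvec_max (n : nat) (X : 'I_n -> nat) : extvec X ord_max = - \sum_(k < n) (X k)%:Z.
Proof. by rewrite /extvec unlift_none. Qed.

Lemma kbound_extvec (n : nat) (X : 'I_n -> nat) : kbound (extvec X) = (\sum_(k < n) X k).*2.
Proof.
rewrite /kbound big_ord_recr /= extvec_max abszN -addnn; congr (_ + _).
  by apply: eq_bigr => i _; rewrite widen_ord_max_lift extvec_lift.
by rewrite -(big_morph Posz PoszD (erefl 0%:Z)).
Qed.

Definition sink_flow (n : nat) (D : 'I_n -> nat) (p : 'I_n.+1 * 'I_n.+1) : nat :=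
  if p.2 == ord_max then (if unlift ord_max p.1 is Some i then D i else 0%N) else 0%N.

Lemma sink_flow_upper (n : nat) (D : 'I_n -> nat) (i j : 'I_n.+1) :
  (j <= i)%N -> sink_flow D (i, j) = 0%N.
Proof.
rewrite /sink_flow /=; case: eqP => // -> max_le_i.
have -> : i = ord_max by apply/val_inj/eqP; rewrite eqn_leq leq_ord.
by rewrite unlift_none.
Qed.

Lemma sink_flow_le (n : nat) (D : 'I_n -> nat) p : (sink_flow D p <= \sum_(k < n) D k)%N.
Proof.
rewrite /sink_flow; case: eqP => // _; case: unliftP => // i _.
by rewrite (bigD1 i) // leq_addr.
Qed.

Lemma net_flow_sink_lift (n : nat) (D : 'I_n -> nat) (i : 'I_n) :
  net_flow (sink_flow D) (lift ord_max i) = (D i)%:Z.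
Proof.
rewrite /net_flow (bigD1 ord_max); last by rewrite lift_max.
rewrite {1}/sink_flow /= eqxx liftK.
rewrite big1 ?addr0 => [|j /andP [_ /negbTE j_max]]; last by rewrite /sink_flow /= j_max.
rewrite big1 ?subr0 // => k _.
by rewrite /sink_flow /= eq_sym (negbTE (neq_lift _ _)).
Qed.

Lemma net_flow_sink_max (n : nat) (D : 'I_n -> nat) :
  net_flow (sink_flow D) ord_max = - \sum_(k < n) (D k)%:Z.
Proof.
rewrite /net_flow big1 => [|j _]; last by rewrite /sink_flow /= unlift_none; case: eqP.
rewrite sub0r big_mkcond big_ord_recr /= ltnn addr0; congr (- _).
by apply: eq_bigr => k _; rewrite ltn_ord /sink_flow /= eqxx widen_ord_max_lift liftK.
Qed.

Lemma extvec_sink_flow (n : nat) (N M : 'I_n -> nat) :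
  (forall i, M i <= N i)%N ->
  forall i, extvec N i = extvec M i + net_flow (sink_flow (fun k => N k - M k)%N) i.
Proof.
move=> leMN i; case: (unliftP ord_max i) => [j ->|->].
  by rewrite !extvec_lift net_flow_sink_lift -PoszD subnKC.
rewrite !extvec_max net_flow_sink_max -opprD -big_split /=; congr (- _).
by apply: eq_bigr => k _; rewrite -PoszD subnKC.
Qed.

Theorem corollary2p9 (n : nat) (N M : 'I_n -> nat) :
  (forall i : 'I_n, (M i <= N i)%N) ->
  (K (extvec M) <= K (extvec N))%N.
Proof.
move=> leMN; apply: (leq_K_add_flow (d := sink_flow (fun k => N k - M k)%N)).
- exact: sink_flow_upper.
- exact: extvec_sink_flow.
move=> p; have := sink_flow_le (fun k => N k - M k)%N p.
have sum_surplus : (\sum_(k < n) (N k - M k) + \sum_(k < n) M k = \sum_(k < n) N k)%N.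
  by rewrite -big_split; apply: eq_bigr => k _ /=; rewrite subnK.
rewrite !kbound_extvec -!addnn; lia.
Qed.
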